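(* Let $p$ be a prime and $n$ an integer with $p>n\ge2$, let $q$ be a power of $p$, and let $\mathrm{disc}_n\in\mathbb{F}_q[a_0,\dots,a_n]$ be the generic discriminant of $\sum_{0\le i\le n}a_ix^i$. Then there is no nonzero $u\in\mathbb{F}_q^{n+1}$ with $\mathrm{disc}_n(a_0-u_0,\dots,a_n-u_n)=\mathrm{disc}_n(a_0,\dots,a_n)$; i.e. $\mathrm{disc}_n$ is not shift-invariant.
   Context: The generic discriminant $\mathrm{disc}_n$ is the reduction modulo $p$ of the integer polynomial in $a_0,\dots,a_n$ equal to $(-1)^{n(n-1)/2}a_n^{-1}\mathrm{Res}(f,f')$ for $f=\sum_{i}a_ix^i$ (equivalently $a_n^{2n-2}\prod_{i<j}(\alpha_i-\alpha_j)^2$ with $\alpha_i$ the roots of $f$); it is absolutely irreducible of degree $2n-2$ and its zero set is the hypersurface of non-squarefree polynomials. *)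

From HB Require Import structures.
From mathcomp Require Import all_boot all_order all_algebra all_field.
Set Implicit Arguments. Unset Strict Implicit. Unset Printing Implicit Defensive.
Import GRing.Theory.
Local Open Scope ring_scope.

Definition gen_poly (L : fieldType) (n : nat) (a : 'I_n.+1 -> L) : {poly L} :=
  \poly_(i < n.+1) a (inord i).

(* Value of the generic discriminant disc_n at a point a with a_n <> 0:
   (-1)^(n(n-1)/2) a_n^{-1} Res(f, f'),  f = sum a_i x^i.
   (Only meaningful when a_n != 0, where it agrees with the value of the
   polynomial disc_n; this is the only case used below.) *)
Definition disc_at (L : fieldType) (n : nat) (a : 'I_n.+1 -> L) : L :=
  (-1) ^+ ((n * n.-1)./2) * (a ord_max)^-1 *
  resultant (gen_poly a) (gen_poly a)^`().

(* disc_n(a - u) = disc_n(a) as polynomials in F[a_0..a_n].  Since we have no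
   multivariate polynomials, this polynomial identity is expressed as equality
   of values at every point of every field extension L of F on the Zariski-dense
   open set where a_n != 0 and a_n - u_n != 0 (equivalent to the polynomial
   identity, as extensions of F may be infinite). *)
Definition disc_shift_invariant (F : fieldType) (n : nat) (u : 'rV[F]_n.+1) : Prop :=
  forall (L : fieldType) (f : {rmorphism F -> L}) (a : 'I_n.+1 -> L),
    a ord_max != 0 -> a ord_max - f (u 0 ord_max) != 0 ->
    disc_at (fun i => a i - f (u 0 i)) = disc_at a.

(* If disc_n were invariant under the shift by u, its zero set -- the polynomials
   with a multiple root -- would be too.  Writing U for the polynomial with
   coefficients u, it therefore suffices to find, over an algebraic closure, a
   polynomial G = lam (X - r)^n + mu of degree n which is squarefree (because p
   does not divide n and mu <> 0) while G - U still has degree n and a double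
   root s, i.e. G osculates U at s.  If U' vanishes identically, U is a nonzero
   constant and G = (X - s)^n + U(s) works at any s with U(s) <> 0.  Otherwise
   pick s with d = U'(s) <> 0 and c = U(s); the two osculation equations
   lam n t^(n-1) = d and lam t^n + mu = c in t = s - r determine lam and mu, and
   the side conditions exclude only the roots of a nonzero polynomial in t. *)
From HB Require Import structures.
From mathcomp Require Import all_boot all_order all_algebra all_field.
From mathcomp Require Import ring.
Set Implicit Arguments. Unset Strict Implicit. Unset Printing Implicit Defensive.
Import GRing.Theory.
Local Open Scope ring_scope.

Section GenericPolynomial.
Variables (L : fieldType) (n : nat).

Lemma coef_gen_poly (a : 'I_n.+1 -> L) (i : 'I_n.+1) : (gen_poly a)`_i = a i.
Proof. by rewrite coef_poly ltn_ord inord_val. Qed.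

Lemma gen_poly_coef (G : {poly L}) :
  (size G <= n.+1)%N -> gen_poly (fun i : 'I_n.+1 => G`_i) = G.
Proof.
move=> sG; apply/polyP => j; rewrite coef_poly.
case: ltnP => hj; first by rewrite inordK.
by rewrite nth_default // (leq_trans sG hj).
Qed.

Lemma gen_polyB (a b : 'I_n.+1 -> L) :
  gen_poly (fun i => a i - b i) = gen_poly a - gen_poly b.
Proof. by apply/polyP => j; rewrite coefB !coef_poly; case: ifP => _; rewrite ?subr0. Qed.

Lemma map_gen_poly (K : fieldType) (f : {rmorphism K -> L}) (a : 'I_n.+1 -> K) :
  map_poly f (gen_poly a) = gen_poly (fun i => f (a i)).
Proof.
by apply/polyP => j; rewrite coef_map !coef_poly; case: ifP => _; rewrite ?raddf0.
Qed.

End GenericPolynomial.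

Lemma disc_at_eq0P (L : closedFieldType) n (a : 'I_n.+1 -> L) :
  a ord_max != 0 ->
  reflect (exists z, root (gen_poly a) z && root (gen_poly a)^`() z) (disc_at a == 0).
Proof.
move=> an0; have a0 : gen_poly a != 0.
  by apply: contraNneq an0 => a0; rewrite -coef_gen_poly a0 coef0.
rewrite /disc_at !mulf_eq0 signr_eq0 invr_eq0 (negbTE an0) /= resultant_eq0.
apply: (iffP idP) => [gcd_gt1 | [z /andP[z1 z2]]].
  have /closed_rootP [z] : size (gcdp (gen_poly a) (gen_poly a)^`()) != 1%N.
    by rewrite neq_ltn gcd_gt1 orbT.
  by rewrite root_gcd; exists z.
by apply: (@root_size_gt1 _ z); rewrite ?gcdp_eq0 ?negb_and ?a0 // root_gcd z1.
Qed.

Definition shifted_pow (L : fieldType) (n : nat) (lam mu r : L) : {poly L} :=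
  lam *: ('X - r%:P) ^+ n + mu%:P.

Section ShiftedPower.
Variables (L : fieldType) (n : nat) (lam mu r : L).
Local Notation G := (shifted_pow n lam mu r).

Lemma size_shifted_pow : (size G <= n.+1)%N.
Proof.
apply: leq_trans (size_polyD _ _) _; rewrite geq_max.
rewrite (leq_trans (size_scale_leq _ _)) ?size_exp_XsubC //.
exact: leq_trans (size_polyC_leq1 _) _.
Qed.

Lemma coef_shifted_pow_n : (0 < n)%N -> G`_n = lam.
Proof.
move=> n_gt0; rewrite coefD coefZ coefC eqn0Ngt n_gt0 addr0.
have /monicP := monic_exp n (monicXsubC r).
by rewrite /lead_coef size_exp_XsubC /= => ->; rewrite mulr1.
Qed.

Lemma horner_shifted_pow s : G.[s] = lam * (s - r) ^+ n + mu.
Proof. by rewrite /shifted_pow !hornerE. Qed.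

Lemma horner_deriv_shifted_pow s : G^`().[s] = lam *+ n * (s - r) ^+ n.-1.
Proof.
rewrite derivD derivC addr0 derivZ deriv_exp derivXsubC mul1r.
by rewrite hornerZ hornerMn horner_exp hornerXsubC mulrnAl mulrnAr.
Qed.

Lemma shifted_pow_no_double_root z :
  (0 < n)%N -> n%:R != 0 :> L -> lam != 0 -> mu != 0 ->
  ~~ (root G z && root G^`() z).
Proof.
move=> n_gt0 n0 lam0 mu0; apply/andP => -[].
rewrite /root horner_deriv_shifted_pow -mulr_natr !mulf_eq0 (negbTE lam0) (negbTE n0).
rewrite expf_eq0 subr_eq0 /= => Gz /andP[_ /eqP zr].
move: Gz; rewrite horner_shifted_pow zr subrr expr0n eqn0Ngt n_gt0 mulr0 add0r.
by rewrite (negbTE mu0).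
Qed.

End ShiftedPower.

Section Osculation.
Variables (L : closedFieldType) (n : nat) (U : {poly L}).
Hypotheses (n_gt1 : (1 < n)%N) (n0 : n%:R != 0 :> L) (U0 : U != 0).

Let n_gt0 : (0 < n)%N. Proof. exact: ltnW. Qed.

Let n_pred_gt0 : (0 < n.-1)%N. Proof. by rewrite -ltnS prednK. Qed.

Definition osculates (G : {poly L}) s := G.[s] = U.[s] /\ G^`().[s] = U^`().[s].

Lemma osculates_double_root G s :
  osculates G s -> root (G - U) s && root (G - U)^`() s.
Proof.
by move=> [G_s dG_s]; rewrite derivB /root !(hornerD, hornerN) G_s dG_s !subrr eqxx.
Qed.

Lemma osculating_shifted_pow_deriv0 :
  U^`() = 0 -> exists lam mu r s, [/\ lam != 0, mu != 0, lam != U`_n &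
    osculates (shifted_pow n lam mu r) s].
Proof.
move=> dU0; have [s Us] := closed_nonrootP U U0.
have Un0 : U`_n = 0.
  have := coef_deriv U n.-1; rewrite dU0 coef0 prednK // => /esym/eqP.
  by rewrite -mulr_natr mulf_eq0 (negbTE n0) orbF => /eqP.
exists 1, U.[s], s, s; split; rewrite ?Un0 ?oner_neq0 //.
split; first by rewrite horner_shifted_pow subrr expr0n eqn0Ngt n_gt0 mulr0 add0r.
by rewrite horner_deriv_shifted_pow dU0 horner0 subrr expr0n eqn0Ngt n_pred_gt0 mulr0.
Qed.

Lemma osculating_shifted_pow_deriv_neq0 :
  U^`() != 0 -> exists lam mu r s, [/\ lam != 0, mu != 0, lam != U`_n &
    osculates (shifted_pow n lam mu r) s].
Proof.
move=> dU0; have [s ds0] := closed_nonrootP _ dU0.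
rewrite /root in ds0; set d := U^`().[s] in ds0; set c := U.[s].
(* Its three factors at t vanish iff t = 0, mu = 0 or lam = U`_n respectively. *)
pose P := 'X * ((n%:R * c)%:P - d *: 'X) * ((n%:R * U`_n) *: 'X^(n.-1) - d%:P).
have P0 : P != 0.
  have lin0 : (n%:R * c)%:P - d *: 'X != 0.
    apply: contra_neq ds0 => /(congr1 (coefp 1)).
    rewrite /= coef0 coefB coefC coefZ coefX /= sub0r mulr1.
    by move=> /eqP; rewrite oppr_eq0 => /eqP.
  have pow0 : (n%:R * U`_n) *: 'X^(n.-1) - d%:P != 0.
    apply: contra_neq ds0 => /(congr1 (coefp 0)).
    rewrite /= coef0 coefB coefC coefZ coefXn (eq_sym 0%N) eqn0Ngt n_pred_gt0 mulr0 sub0r.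
    by move=> /eqP; rewrite oppr_eq0 => /eqP.
  by rewrite !mulf_neq0 ?polyX_eq0.
have [t] := closed_nonrootP P P0.
rewrite /P !rootM !negb_or /root !hornerE => /andP[/andP[t0 mu0] lamU].
have tn0 : t ^+ n.-1 != 0 by rewrite expf_neq0.
have Etn : t ^+ n = t * t ^+ n.-1 by rewrite -exprS prednK.
pose lam := d / (n%:R * t ^+ n.-1).
exists lam, (c - lam * t ^+ n), (s - t), s; split.
- by rewrite mulf_neq0 // invr_neq0 // mulf_neq0.
- have -> : c - lam * t ^+ n = (n%:R * c - d * t) / n%:R.
    by rewrite /lam Etn; field; rewrite n0 tn0.
  by rewrite mulf_neq0 // invr_neq0.
- apply: contra lamU => /eqP <-; apply/eqP; rewrite /lam; field.
  by rewrite n0 tn0.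
- split; first by rewrite horner_shifted_pow subKr addrC subrK.
  rewrite horner_deriv_shifted_pow subKr -/d /lam -mulr_natr; field.
  by rewrite n0 tn0.
Qed.

Lemma osculating_shifted_pow : exists lam mu r s,
  [/\ lam != 0, mu != 0, lam != U`_n & osculates (shifted_pow n lam mu r) s].
Proof.
by case: (eqVneq U^`() 0) =>
  [/osculating_shifted_pow_deriv0 | /osculating_shifted_pow_deriv_neq0].
Qed.

End Osculation.

Section DoubleRootLocus.
Variables (F : fieldType) (L : closedFieldType) (f : {rmorphism F -> L}).
Variables (n : nat) (u : 'rV[F]_n.+1).
Hypothesis inv : disc_shift_invariant u.
Local Notation U := (map_poly f (gen_poly (u 0))).

Lemma shift_invariant_double_root (G : {poly L}) :
  (size G <= n.+1)%N -> G`_n != 0 -> G`_n != U`_n ->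
  (exists z, root (G - U) z && root (G - U)^`() z) ->
  exists z, root G z && root G^`() z.
Proof.
move=> sG Gn0 GnU GU_double.
pose a i := G`_(@nat_of_ord n.+1 i).
have aG : gen_poly a = G by exact: gen_poly_coef.
have u_n : f (u 0 ord_max) = U`_n by rewrite map_gen_poly (coef_gen_poly _ ord_max).
have a_shift : gen_poly (fun i => a i - f (u 0 i)) = G - U.
  by rewrite gen_polyB aG map_gen_poly.
have an0 : a ord_max != 0 by [].
have an_shift0 : a ord_max - f (u 0 ord_max) != 0 by rewrite u_n subr_eq0.
have shift0 : disc_at (fun i => a i - f (u 0 i)) = 0.
  by apply/eqP/(disc_at_eq0P an_shift0); rewrite a_shift.
have /(disc_at_eq0P an0) : disc_at a == 0.
  by rewrite -(inv an0 an_shift0) shift0.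
by rewrite aG.
Qed.

End DoubleRootLocus.

Theorem mainTheorem17 (p n k : nat) (F : finFieldType) :
  prime p -> (2 <= n)%N -> (n < p)%N -> (0 < k)%N -> #|F| = (p ^ k)%N ->
  forall u : 'rV[F]_n.+1, u != 0 -> ~ disc_shift_invariant u.
Proof.
move=> p_pr n_gt1 n_lt_p _ cardF u u0 inv.
have n_gt0 : (0 < n)%N by exact: ltnW.
have [K [f _]] := countable_algebraic_closure F.
have charK : p \in [pchar K] := rmorph_pchar f (card_finPcharP cardF p_pr).
have n0 : n%:R != 0 :> K by rewrite -(dvdn_pcharf charK) gtnNdvd.
pose U := map_poly f (gen_poly (u 0)).
have U0 : U != 0.
  rewrite map_poly_eq0; apply: contra u0 => /eqP Ua; apply/eqP/matrixP => i j.
  by rewrite ord1 mxE -(coef_gen_poly (u 0) j) Ua coef0.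
have [lam [mu [r [s [lam0 mu0 lamU osc]]]]] := osculating_shifted_pow n_gt1 n0 U0.
have [z] : exists z, root (shifted_pow n lam mu r) z && root (shifted_pow n lam mu r)^`() z.
  apply: (shift_invariant_double_root (f := f) inv (size_shifted_pow n lam mu r));
    rewrite ?coef_shifted_pow_n //.
  by exists s; apply: osculates_double_root osc.
by apply/negP; exact: shifted_pow_no_double_root.
Qed.
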